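(* Let $\mathcal N$ be an irreducible SDAN. Then every agent of $A$ is a party of every atom of $\mathcal N$, and for every atom $n\neq n_f$ and every outcome $r\in R_n$ there is an atom $n'$ such that $\mathcal X(n,a,r)=\{n'\}$ for every agent $a\in A$.
   Context: Fix a finite nonempty set $A$ of agents; each $a\in A$ has a nonempty set $Q_a$ of internal states, $Q_A=\prod_{a\in A}Q_a$. A transformer is a left-total relation on $Q_A$; for $S\subseteq A$ an $S$-transformer is one with $(q,q')\in\tau\Rightarrow q_a=q'_a$ for all $a\notin S$. An atom is $n=(P_n,R_n,\delta_n)$: $P_n\subseteq A$ nonempty (parties), $R_n$ finite nonempty (outcomes), $\delta_n$ assigns to each $r\in R_n$ a $P_n$-transformer $\langle n,r\rangle$. A negotiation is $\mathcal N=(N,n_0,n_f,\mathcal X)$ with $N$ a finite set of atoms, $n_0,n_f\in N$ (possibly equal), $T(N)=\{(n,a,r): n\in N,a\in P_n,r\in R_n\}$, $\mathcal X:T(N)\to 2^N$, such that every agent is a party of $n_0$ and of $n_f$, and $\mathcal X(n,a,r)=\emptyset$ iff $n=n_f$. Its graph has vertices $N$ and edges $(n,n')$ whenever $n'\in\mathcal X(n,a,r)$ for some $(n,a,r)$; $\mathcal N$ is acyclic if the graph has no cycle. A marking is $x:A\to 2^N$; initial $x_0(a)=\{n_0\}$, final $x_f(a)=\emptyset$. $x$ enables $n$ if $n\in x(a)$ for all $a\in P_n$; then for $r\in R_n$ the step $(n,r)$ leads to $x'$ with $x'(a)=\mathcal X(n,a,r)$ for $a\in P_n$, $x'(a)=x(a)$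 otherwise. A large step is a finite occurrence sequence from $x_0$ to $x_f$. $\mathcal N$ is sound if every atom is enabled at some reachable marking and every occurrence sequence from $x_0$ is a large step or can be extended to one. An agent $a$ is deterministic if for each $(n,a,r)\in T(N)$ with $n\ne n_f$, $\mathcal X(n,a,r)$ is a singleton; $\mathcal N$ is deterministic if all agents are deterministic. An SDAN is a sound, deterministic, acyclic negotiation. Merge rule. Guard: some atom $n$ has distinct outcomes $r_1,r_2$ with $\mathcal X(n,a,r_1)=\mathcal X(n,a,r_2)$ for all $a\in P_n$. Action: replace $r_1,r_2$ in $R_n$ by a fresh outcome $r_f$ with $\mathcal X(n,a,r_f)=\mathcal X(n,a,r_1)$ for $a\in P_n$ and $\langle n,r_f\rangle=\langle n,r_1\rangle\cup\langle n,r_2\rangle$. $(n,r)$ unconditionally enables $n'$ if $P_n\supseteq P_{n'}$ and $\mathcal X(n,a,r)=\{n'\}$ for all $a\in P_{n'}$. d-shortcut rule. Guard: atoms $n\neq n'$ and $r\in R_n$ such that $(n,r)$ unconditionally enables $n'$; $n'$ has at most one outcome; and if $n'\in\mathcal X(\tilde n,\tilde a,\tilde r)$ for at least one $(\tilde n,\tilde a,\tilde r)\in T(N)$ with $\tilde n\neq n$, then $\{n'\}=\mathcal X(\tilde n,\tilde a,\tilde r)$ for some $(\tilde n,\tilde a,\tilde r)\in T(N)$ with $\tilde n\ne n$. Action: (1) replace $R_n$ by $(R_n\setminus\{r\})\cup\{r'_f:r'\in R_{n'}\}$ with fresh names; (2) for $a\in P_{n'}$ set $\mathcal X(n,a,r'_f)=\mathcal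 X(n',a,r')$, for $a\in P_n\setminus P_{n'}$ set $\mathcal X(n,a,r'_f)=\mathcal X(n,a,r)$; (3) $\langle n,r'_f\rangle=\langle n,r\rangle\langle n',r'\rangle$ (relational composition); (4) if afterwards $n'\notin\mathcal X(\tilde n,\tilde a,\tilde r)$ for all $(\tilde n,\tilde a,\tilde r)\in T(N)$, remove $n'$. An SDAN is irreducible if neither the merge rule nor the d-shortcut rule can be applied to it. *)

From mathcomp Require Import all_boot.
Set Implicit Arguments. Unset Strict Implicit. Unset Printing Implicit Defensive.

(* The atom set N is the whole finite type [atom]; outcomes of all atoms are
   drawn from a common finite type [outcome], with R_n = outcomes n. *)
Definition gstate (A : finType) (Q : A -> Type) := forall a : A, Q a.

Record negotiation (A : finType) (Q : A -> Type) := Negotiation {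
  atom : finType;
  outcome : finType;
  parties : atom -> {set A};
  outcomes : atom -> {set outcome};
  trans : atom -> outcome -> gstate Q -> gstate Q -> Prop;
  xnext : atom -> A -> outcome -> {set atom};
  n0 : atom;
  nf : atom }.

Arguments parties {A Q} n _.
Arguments outcomes {A Q} n _.
Arguments trans {A Q} n _ _ _ _.
Arguments xnext {A Q} n _ _ _.
Arguments n0 {A Q} n.
Arguments nf {A Q} n.

Section Neg.
Variables (A : finType) (Q : A -> Type) (N : negotiation Q).
Local Notation P := (parties N).
Local Notation R := (outcomes N).
Local Notation X := (xnext N).
Local Notation atm := (atom N).
Local Notation out := (outcome N).

Definition inT (n : atm) (a : A) (r : out) := (a \in P n) && (r \in R n).

Definition transformer (S : {set A}) (t : gstate Q -> gstate Q -> Prop) :=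
  (forall q, exists q', t q q') /\
  (forall q q', t q q' -> forall a, a \notin S -> q a = q' a).

Definition well_formed : Prop :=
  (exists a : A, True) /\
  (forall a, inhabited (Q a)) /\
  (forall n, P n != set0) /\
  (forall n, R n != set0) /\
  (forall n r, r \in R n -> transformer (P n) (trans N n r)) /\
  (forall a, a \in P (n0 N)) /\ (forall a, a \in P (nf N)) /\
  (forall n a r, inT n a r -> (X n a r == set0) = (n == nf N)).

Definition edge : rel atm :=
  fun n n' => [exists a, exists r, inT n a r && (n' \in X n a r)].

Definition acyclic : Prop :=
  ~ exists (n : atm) (p : seq atm), p != [::] /\ path edge n p /\ last n p = n.

Definition marking := {ffun A -> {set atm}}.
Definition x0 : marking := [ffun _ => [set n0 N]].
Definition xf : marking := [ffun _ => set0].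
Definition enabled (x : marking) (n : atm) := [forall a in P n, n \in x a].
Definition stepm (x : marking) (n : atm) (r : out) : marking :=
  [ffun a => if a \in P n then X n a r else x a].

Fixpoint occ (x : marking) (s : seq (atm * out)) : option marking :=
  match s with
  | [::] => Some x
  | (n, r) :: s' => if enabled x n && (r \in R n) then occ (stepm x n r) s' else None
  end.

Definition sound : Prop :=
  (forall n, exists s x, occ x0 s = Some x /\ enabled x n) /\
  (forall s x, occ x0 s = Some x -> exists s', occ x0 (s ++ s') = Some xf).

Definition deterministic : Prop :=
  forall n a r, inT n a r -> n != nf N -> exists n', X n a r = [set n'].

Definition SDAN : Prop := sound /\ deterministic /\ acyclic.

Definition merge_applicable : Prop :=
  exists n r1 r2, [/\ r1 \in R n, r2 \in R n, r1 != r2 &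
                     forall a, a \in P n -> X n a r1 = X n a r2].

Definition uncond_enables (n : atm) (r : out) (n' : atm) : Prop :=
  P n' \subset P n /\ (forall a, a \in P n' -> X n a r = [set n']).

Definition dshortcut_applicable : Prop :=
  exists n n' r,
    [/\ n != n', r \in R n, uncond_enables n r n', #|R n'| <= 1 &
     (exists nt at0 rt, [/\ inT nt at0 rt, nt != n & n' \in X nt at0 rt]) ->
     (exists nt at0 rt, [/\ inT nt at0 rt, nt != n & X nt at0 rt = [set n']])].

Definition irreducible : Prop := ~ merge_applicable /\ ~ dshortcut_applicable.

End Neg.

From mathcomp Require Import all_boot.
From mathcomp Require Import zify.
Set Implicit Arguments. Unset Strict Implicit. Unset Printing Implicit Defensive.

(* Determinism keeps every agent on at most one atom at a time, and soundness
   forces an agent to wait only at atoms it is a party of.  Fix a topological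
   rank of the acyclic graph and consider greedy runs, which always fire the
   enabled atom of least rank.  Greedy runs keep all agents together: if after
   a synchronised step at f the agents split, the least enabled atom M is
   unconditionally enabled by that step.  Running the greedy continuations
   after two outcomes of M side by side (by induction downwards along the
   rank) shows that both outcomes send every party of M to the same atom, so
   by irreducibility of the merge rule M has at most one outcome and the
   d-shortcut rule would apply.  Every reachable marking is reached greedily,
   so every atom is enabled at a marking where all agents sit on it. *)

Section TopologicalRank.
Variables (T : finType) (e : rel T).
Hypothesis e_acyclic : forall x y, e x y -> ~~ connect e y x.

Definition ndescendants x := #|[pred z | connect e x z]|.

Lemma ndescendants_edge x y : e x y -> ndescendants y < ndescendants x.
Proof.
move=> exy; apply: proper_card; apply/properP; split.
  by apply/subsetP => z; rewrite !inE; apply: connect_trans (connect1 exy).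
by exists x; rewrite !inE ?connect0 // e_acyclic.
Qed.

(* [enum_rank] breaks ties, making the rank injective. *)
Definition topo_rank x := (#|T| - ndescendants x) * #|T| + enum_rank x.

Lemma topo_rank_inj : injective topo_rank.
Proof.
move=> x y /(congr1 (modn^~ #|T|)); rewrite /topo_rank !modnMDl.
by rewrite !modn_small ?ltn_ord // => /ord_inj/enum_rank_inj.
Qed.

Lemma topo_rank_edge x y : e x y -> topo_rank x < topo_rank y.
Proof.
move=> exy; have lt_xy := ndescendants_edge exy.
have le_x : ndescendants x <= #|T| := max_card _.
rewrite /topo_rank (leq_trans (_ : _ < (#|T| - ndescendants x).+1 * #|T|)) //.
  by rewrite mulSn addnC ltn_add2r.
by rewrite (leq_trans _ (leq_addr _ _)) // leq_mul2r; apply/orP; right; lia.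
Qed.

End TopologicalRank.

Lemma set1_neq0 (T : finType) (t : T) : [set t] != set0.
Proof. by apply/set0Pn; exists t; rewrite set11. Qed.

Section Negotiation.
Variables (A : finType) (Q : A -> Type) (N : negotiation Q).
Hypotheses (wf : well_formed N) (snd : sound N) (det : deterministic N)
  (acy : acyclic N) (irr : irreducible N).

Local Notation P := (parties N).
Local Notation R := (outcomes N).
Local Notation X := (xnext N).
Local Notation atm := (atom N).
Local Notation mk := (marking N).
Local Notation rank := (topo_rank (@edge _ _ N)).

Lemma xnext_eq0 n a r : inT n a r -> (X n a r == set0) = (n == nf N).
Proof. by have [_ [_ [_ [_ [_ [_ [_ H]]]]]]] := wf; apply: H. Qed.

Lemma party_exists n : exists c, c \in P n.
Proof. by have [_ [_ [/(_ n)/set0Pn [c cP] _]]] := wf; exists c. Qed.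

Lemma outcome_exists n : exists r, r \in R n.
Proof. by have [_ [_ [_ [/(_ n)/set0Pn [r rR] _]]]] := wf; exists r. Qed.

Lemma nonparty_neq_nf L : (exists o, o \notin P L) -> L != nf N.
Proof.
case=> o; apply: contraNneq => ->.
by have [_ [_ [_ [_ [_ [_ [H _]]]]]]] := wf; apply: H.
Qed.

Lemma xnext_set1 L a r d : a \in P L -> r \in R L -> L != nf N ->
  d \in X L a r -> X L a r = [set d].
Proof.
move=> aP rR nnf; have iT : inT L a r by rewrite /inT aP rR.
by have [m ->] := det iT nnf; rewrite inE => /eqP ->.
Qed.

Lemma xnext_neq0 n a r : a \in P n -> r \in R n -> n != nf N -> X n a r != set0.
Proof. by move=> aP rR; rewrite xnext_eq0 ?/inT ?aP ?rR. Qed.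

Lemma xf_not_enabled n : ~~ enabled (xf N) n.
Proof.
have [c cP] := party_exists n.
by apply/forall_inP => /(_ _ cP); rewrite ffunE inE.
Qed.

Lemma enabled_step (x : mk) n r m : r \in R n -> enabled (stepm x n r) m ->
  enabled x m \/ edge n m.
Proof.
move=> rR en; have [/existsP [c /andP [cm cn]]|shared] :=
  boolP [exists c, (c \in P m) && (c \in P n)].
  right; apply/existsP; exists c; apply/existsP; exists r.
  by move/forall_inP: en => /(_ _ cm); rewrite ffunE cn /inT cn rR => ->.
left; apply/forall_inP => c cm; move/forall_inP: en => /(_ _ cm).
rewrite ffunE; case: ifP => // cn.
by case/negP: shared; apply/existsP; exists c; rewrite cm cn.
Qed.

Lemma rank_edge n m : edge n m -> rank n < rank m.
Proof.
apply: topo_rank_edge => {}n {}m nm; apply/negP => /connectP [p mp pn].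
by apply: acy; exists n, (m :: p); rewrite /= nm mp.
Qed.

Lemma occ_cat (x y : mk) s s' : occ x s = Some y -> occ x (s ++ s') = occ y s'.
Proof.
elim: s x => [|[n r] s IH] x /=; first by case=> ->.
by case: ifP => // _ /IH.
Qed.

Definition reachable (x : mk) := exists s, occ (x0 N) s = Some x.

Lemma reachable_step (x : mk) n r :
  reachable x -> enabled x n -> r \in R n -> reachable (stepm x n r).
Proof.
case=> s occ_s en rR; exists (s ++ [:: (n, r)]).
by rewrite (occ_cat _ occ_s) /= en rR.
Qed.

Lemma reachable_completes (x : mk) : reachable x -> exists s, occ x s = Some (xf N).
Proof.
case=> s occ_s; have [_ /(_ _ _ occ_s) [s' occ_s']] := snd.
by exists s'; rewrite -(occ_cat _ occ_s).
Qed.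

Lemma reachable_enabled (x : mk) : reachable x -> x <> xf N -> exists n, enabled x n.
Proof.
move=> /reachable_completes [[|[n r] s] /=]; first by case=> ->.
by case: ifP => // /andP [en _] _ _; exists n.
Qed.

Definition atmost1 (x : mk) := forall b, x b = set0 \/ exists m, x b = [set m].

Lemma atmost1_step (x : mk) n r : atmost1 x -> r \in R n -> atmost1 (stepm x n r).
Proof.
move=> x1 rR b; rewrite ffunE; case: ifP => // bP.
have iT : inT n b r by rewrite /inT bP rR.
have [nf_n|nnf] := eqVneq n (nf N); last by right; apply: det.
by left; apply/eqP; rewrite xnext_eq0 // nf_n.
Qed.

Lemma reachable_atmost1 (x : mk) : reachable x -> atmost1 x.
Proof.
have x0_1 : atmost1 (x0 N) by move=> b; right; exists (n0 N); rewrite ffunE.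
case=> s; elim: s (x0 N) x0_1 => [|[n r] s IH] y y1 /=; first by case=> <-.
by case: ifP => // /andP [_ rR]; apply: IH; apply: atmost1_step.
Qed.

Lemma atmost1_mem (x : mk) n c : atmost1 x -> n \in x c -> x c = [set n].
Proof. by move=> /(_ c) [->|[m ->]]; rewrite inE // => /eqP ->. Qed.

Lemma occ_nonparty (x y : mk) s b m :
  x b = [set m] -> b \notin P m -> occ x s = Some y -> y b = [set m].
Proof.
elim: s x => [|[n r] s IH] x /=; first by move=> ? ? [<-].
case: ifP => // /andP [en _] xb bm; apply: IH => //.
rewrite ffunE; case: ifP => // bn.
move/forall_inP: en => /(_ _ bn); rewrite xb inE => /eqP mn.
by rewrite -mn bn in bm.
Qed.

Lemma reachable_party (x : mk) b m : reachable x -> x b = [set m] -> b \in P m.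
Proof.
move=> /reachable_completes [s occ_s] xb; apply: contraT => bm.
have := occ_nonparty xb bm occ_s; rewrite ffunE => /esym/eqP.
by rewrite (negbTE (set1_neq0 m)).
Qed.

(* Firing atoms above rank [k] only enables atoms above rank [k]. *)
Lemma occ_frozen s (x y : mk) k b d : (forall m, enabled x m -> k < rank m) ->
  x b = [set d] -> rank d <= k -> occ x s = Some y -> y b = [set d].
Proof.
elim: s x => [|[n r] s IH] x /=; first by move=> ? ? ? [<-].
case: ifP => // /andP [en rR] above xb kd; apply: IH => //.
  move=> m /(enabled_step rR) [/above //|/rank_edge]; exact: ltn_trans (above _ en).
rewrite ffunE; case: ifP => // bn.
have /forall_inP /(_ _ bn) := en; rewrite xb inE => /eqP dn.
by have := above _ en; rewrite dn ltnNge kd.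
Qed.

Lemma reachable_waiting (x : mk) b d : reachable x -> x b = [set d] ->
  exists2 m, enabled x m & rank m <= rank d.
Proof.
move=> /reachable_completes [s occ_s] xb; apply/exists_inP; apply: contraT.
rewrite negb_exists_in => /forall_inP above.
have above_d m : enabled x m -> rank d < rank m by move/above; rewrite ltnNge.
have := occ_frozen above_d xb (leqnn _) occ_s; rewrite ffunE => /esym/eqP.
by rewrite (negbTE (set1_neq0 d)).
Qed.

Definition synced (x : mk) := [exists m, [forall b, x b == [set m]]].

Lemma syncedP (x : mk) : reflect (exists t, forall b, x b = [set t]) (synced x).
Proof.
apply: (iffP existsP) => [[t /forallP xt]|[t xt]]; exists t.
  by move=> b; apply/eqP.
by apply/forallP => b; rewrite xt.
Qed.

Definition least_enabled (x : mk) n :=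
  enabled x n /\ forall m, enabled x m -> rank n <= rank m.

Lemma least_enabled_exists (x : mk) :
  (exists n, enabled x n) -> exists n, least_enabled x n.
Proof.
case=> n en; exists [arg min_(i < n | enabled x i) rank i].
by case: arg_minnP.
Qed.

Lemma synced_enabled (x : mk) f n : (forall b, x b = [set f]) -> enabled x n -> n = f.
Proof.
move=> xt en; have [c cn] := party_exists n.
by move/forall_inP: en => /(_ _ cn); rewrite xt inE => /eqP.
Qed.

Lemma synced_least (x : mk) f n : (forall b, x b = [set f]) -> enabled x n ->
  least_enabled x n.
Proof.
by move=> xt en; split => // m em; rewrite (synced_enabled xt en) (synced_enabled xt em).
Qed.

Inductive greedy : mk -> Prop :=
| greedy0 : greedy (x0 N)
| greedyS x n r : greedy x -> least_enabled x n -> r \in R n -> greedy (stepm x n r).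

Lemma greedy_reachable x : greedy x -> reachable x.
Proof.
elim=> [|y n r _ ry [en _] rR]; first by exists [::].
exact: reachable_step.
Qed.

Lemma greedy_least_enabled x : greedy x -> x <> xf N -> exists n, least_enabled x n.
Proof. by move=> /greedy_reachable rx /(reachable_enabled rx)/least_enabled_exists. Qed.

Lemma least_enabled_step (x : mk) n r : least_enabled x n -> r \in R n ->
  forall m, enabled (stepm x n r) m -> rank n < rank m.
Proof.
move=> [en least] rR m em; case: (enabled_step rR em) => [/least|/rank_edge //].
rewrite leq_eqVlt => /orP [/eqP/topo_rank_inj nm|//]; subst m.
have [c cn] := party_exists n; have /forall_inP /(_ _ cn) := em.
rewrite ffunE cn => nn.
have /rank_edge : edge n n.
  by apply/existsP; exists c; apply/existsP; exists r; rewrite /inT cn rR nn.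
by rewrite ltnn.
Qed.

Definition indifferent (L : atm) := forall r1 r2, r1 \in R L -> r2 \in R L ->
  forall a, a \in P L -> X L a r1 = X L a r2.

Lemma indifferent_card L : indifferent L -> #|R L| <= 1.
Proof.
move=> indL; apply/card_le1_eqP => r1 r2 r1R r2R.
have [//|r12] := eqVneq r1 r2; have [merge _] := irr; exfalso; apply: merge.
by exists L, r1, r2; split => // a aP; apply: indL.
Qed.

Lemma uncond_enables_indifferent L r d : r \in R L -> L != d ->
  uncond_enables L r d -> ~ indifferent d.
Proof.
move=> rR Ld Ld_uncond indd; have [_ shortcut] := irr; apply: shortcut.
exists L, d, r; split => //; first exact: indifferent_card.
case=> nt [at0 [rt [iT ntL dX]]]; exists nt, at0, rt; split => //.
have [nf_nt|nnf] := eqVneq nt (nf N).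
  by move: dX; have := xnext_eq0 iT; rewrite nf_nt eqxx => /eqP ->; rewrite inE.
by have [m ntX] := det iT nnf; move: dX; rewrite ntX inE => /eqP ->.
Qed.

(* [u] and [v] continue the same marking after firing [L] with [r1], resp.
   [r2], followed by the same steps: agents on which they differ still wait
   where [L] sent them. *)
Definition twin (L : atm) r1 r2 (u v : mk) :=
  (forall b, u b = v b \/ [/\ b \in P L, u b = X L b r1 & v b = X L b r2]) /\
  (forall a, a \in P L -> X L a r1 = X L a r2 \/ (u a = X L a r1 /\ v a = X L a r2)).

Lemma twin_sym L r1 r2 u v : twin L r1 r2 u v -> twin L r2 r1 v u.
Proof.
case=> [same tw]; split => [b|a aP].
  by case: (same b) => [->|[? ? ?]]; [left|right].
by case: (tw a aP) => [->|[? ?]]; [left|right].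
Qed.

Lemma twin_step L r1 r2 u v d r : r1 \in R L -> r2 \in R L -> L != nf N ->
  twin L r1 r2 u v -> enabled u d -> enabled v d ->
  twin L r1 r2 (stepm u d r) (stepm v d r).
Proof.
move=> r1R r2R nnf [same tw] eu ev; split => [b|a aP].
  by rewrite !ffunE; case: ifP => bd; [left|apply: same].
case: (tw a aP) => [|[ua va]]; first by left.
have [ad|ad] := boolP (a \in P d); last by right; rewrite !ffunE (negbTE ad).
have du : d \in u a by move/forall_inP: eu => /(_ _ ad).
have dv : d \in v a by move/forall_inP: ev => /(_ _ ad).
rewrite ua in du; rewrite va in dv.
by left; rewrite (xnext_set1 aP r1R nnf du) (xnext_set1 aP r2R nnf dv).
Qed.

Definition nabove k := #|[pred m : atm | k < rank m]|.

Lemma nabove_lt k d : k < rank d -> nabove (rank d) < nabove k.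
Proof.
move=> kd; apply: proper_card; apply/properP; split.
  by apply/subsetP => m; rewrite !inE; apply: ltn_trans.
by exists d; rewrite !inE ?ltnn.
Qed.

Section Lockstep.
Variable L : atm.
Hypothesis indifferent_above : forall d u, greedy u -> ~~ synced u ->
  least_enabled u d -> rank L < rank d -> indifferent d.
Hypothesis L_nonparty : exists o, o \notin P L.

Lemma twin_least_shared r1 r2 u v d : r1 \in R L -> greedy u -> twin L r1 r2 u v ->
  ~~ synced u -> least_enabled u d -> rank L < rank d -> exists2 q, q \in P d & u q = v q.
Proof.
move=> r1R gu [same _] nsu [en least] Ld.
have [/exists_inP [q qd /eqP uv]|] := boolP [exists q in P d, u q == v q].
  by exists q.
rewrite negb_exists_in => /forall_inP split_d; exfalso.
apply: (uncond_enables_indifferent r1R _ _ (indifferent_above gu nsu (conj en least) Ld)).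
  by apply: contraTneq Ld => ->; rewrite ltnn.
have moved q : q \in P d -> q \in P L /\ X L q r1 = [set d].
  move=> qd; case: (same q) => [uv|[qL uq _]].
    by move: (split_d q qd); rewrite uv eqxx.
  split=> //; apply: xnext_set1 => //; first exact: nonparty_neq_nf.
  by rewrite -uq; move/forall_inP: en => /(_ _ qd).
split; first by apply/subsetP => q /moved [].
by move=> q /moved [].
Qed.

Lemma twin_least_below r1 r2 u v d : r1 \in R L -> greedy u -> greedy v ->
  twin L r1 r2 u v -> ~~ synced u -> least_enabled u d -> rank L < rank d ->
  exists2 m, enabled v m & rank m <= rank d.
Proof.
move=> r1R gu gv tw nsu ld Ld; have [q qd uv] := twin_least_shared r1R gu tw nsu ld Ld.
have dq : d \in v q by rewrite -uv; case: ld => /forall_inP /(_ _ qd).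
have rv := greedy_reachable gv.
exact: reachable_waiting rv (atmost1_mem (reachable_atmost1 rv) dq).
Qed.

Lemma twin_least_eq r1 r2 u v du dv : r1 \in R L -> r2 \in R L ->
  greedy u -> greedy v -> twin L r1 r2 u v -> ~~ synced u -> ~~ synced v ->
  least_enabled u du -> least_enabled v dv -> rank L < rank du -> rank L < rank dv ->
  du = dv.
Proof.
move=> r1R r2R gu gv tw nsu nsv ldu ldv Ldu Ldv.
apply/topo_rank_inj/eqP; rewrite eqn_leq; apply/andP; split.
  have [m em] := twin_least_below r2R gv gu (twin_sym tw) nsv ldv Ldv.
  exact: leq_trans (ldu.2 _ em).
have [m em] := twin_least_below r1R gu gv tw nsu ldu Ldu.
exact: leq_trans (ldv.2 _ em).
Qed.

Lemma twin_synced r1 r2 u v k : r2 \in R L -> greedy u -> greedy v ->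
  twin L r1 r2 u v -> synced u -> rank L <= k ->
  (forall m, enabled v m -> k < rank m) -> synced v.
Proof.
move=> r2R gu gv tw /syncedP [t ut] Lk above; apply: contraT => nsv.
have [o oL] := L_nonparty.
have vo : v o = [set t].
  by case: (tw.1 o) => [<-|[oL' _ _]]; [apply: ut | rewrite oL' in oL].
have nvf : v <> xf N.
  by move=> vf; move: vo; rewrite vf ffunE => /esym/eqP; rewrite (negbTE (set1_neq0 t)).
have [d ld] := greedy_least_enabled gv nvf.
have Ld : rank L < rank d := leq_ltn_trans Lk (above _ ld.1).
have [q qd vu] := twin_least_shared r2R gv (twin_sym tw) nsv ld Ld.
have : d \in v q by case: ld => /forall_inP /(_ _ qd).
rewrite vu ut inE => /eqP dt; subst d.
have full b : b \in P t by apply: reachable_party (greedy_reachable gu) (ut b).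
case/negP: nsv; apply/syncedP; exists t => b.
apply: (atmost1_mem (reachable_atmost1 (greedy_reachable gv))).
by case: ld => /forall_inP /(_ _ (full b)).
Qed.

Lemma twin_synced_end r1 r2 u v : synced u -> synced v -> twin L r1 r2 u v ->
  forall a, a \in P L -> X L a r1 = X L a r2.
Proof.
move=> /syncedP [t ut] /syncedP [t' vt'] [same tw].
have [o oL] := L_nonparty.
have tt' : t = t'.
  case: (same o) => [|[oL' _ _]]; last by rewrite oL' in oL.
  by rewrite ut vt' => /set1_inj.
by move=> a aP; case: (tw a aP) => [//|[<- <-]]; rewrite ut vt' tt'.
Qed.

Lemma twin_final_end r1 r2 u v : r1 \in R L -> u = xf N -> twin L r1 r2 u v ->
  forall a, a \in P L -> X L a r1 = X L a r2.
Proof.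
move=> r1R -> [_ tw] a aP; case: (tw a aP) => [//|[uX _]].
have := xnext_neq0 aP r1R (nonparty_neq_nf L_nonparty).
by rewrite -uX ffunE eqxx.
Qed.

(* [j] bounds the number of atoms above rank [k]; each common step raises [k]. *)
Lemma twin_lockstep r1 r2 : r1 \in R L -> r2 \in R L ->
  forall j k u v, nabove k < j -> rank L <= k -> greedy u -> greedy v ->
  (forall m, enabled u m -> k < rank m) -> (forall m, enabled v m -> k < rank m) ->
  twin L r1 r2 u v -> forall a, a \in P L -> X L a r1 = X L a r2.
Proof.
move=> r1R r2R; elim=> [//|j IHj] k u v jk Lk gu gv above_u above_v tw.
have [uf|/eqP nuf] := eqVneq u (xf N); first exact: twin_final_end r1R uf tw.
have [vf|/eqP nvf] := eqVneq v (xf N).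
  by move=> a aP; apply/esym; apply: twin_final_end r2R vf (twin_sym tw) a aP.
have [su|nsu] := boolP (synced u).
  exact: twin_synced_end su (twin_synced r2R gu gv tw su Lk above_v) tw.
have [sv|nsv] := boolP (synced v).
  by move: nsu; rewrite (twin_synced r1R gv gu (twin_sym tw) sv Lk above_u).
have [d ld] := greedy_least_enabled gu nuf.
have [dv ldv] := greedy_least_enabled gv nvf.
have Ld : rank L < rank d := leq_ltn_trans Lk (above_u _ ld.1).
have Ldv : rank L < rank dv := leq_ltn_trans Lk (above_v _ ldv.1).
have ddv := twin_least_eq r1R r2R gu gv tw nsu nsv ld ldv Ld Ldv; subst dv.
have [r rR] := outcome_exists d.
apply: (IHj (rank d) (stepm u d r) (stepm v d r)).
- exact: leq_trans (nabove_lt (above_u _ ld.1)) _.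
- exact: ltnW.
- exact: greedyS.
- exact: greedyS.
- exact: least_enabled_step.
- exact: least_enabled_step.
- exact: twin_step r1R r2R (nonparty_neq_nf L_nonparty) tw ld.1 ldv.1.
Qed.

End Lockstep.

Lemma least_enabled_indifferent j L z : nabove (rank L) < j -> greedy z ->
  ~~ synced z -> least_enabled z L -> indifferent L.
Proof.
elim: j L z => [//|j IHj] L z jL gz nsz lL.
have above d u : greedy u -> ~~ synced u -> least_enabled u d -> rank L < rank d ->
    indifferent d.
  move=> gu nsu ld Ld; apply: (IHj d u) => //.
  exact: leq_trans (nabove_lt Ld) _.
have L_nonparty : exists o, o \notin P L.
  have [/forallP Lfull|] := boolP [forall o, o \in P L]; last first.
    by rewrite negb_forall => /existsP.
  case/negP: nsz; apply/syncedP; exists L => b.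
  apply: (atmost1_mem (reachable_atmost1 (greedy_reachable gz))).
  by case: lL => /forall_inP /(_ _ (Lfull b)).
move=> r1 r2 r1R r2R.
apply: (twin_lockstep above L_nonparty r1R r2R (ltnSn _) (leqnn _)
          (greedyS gz lL r1R) (greedyS gz lL r2R)).
- exact: least_enabled_step.
- exact: least_enabled_step.
split=> [b|a aP]; last by right; rewrite !ffunE aP.
by rewrite !ffunE; case: ifP => bL; [right|left].
Qed.

Lemma greedy_synced x : greedy x -> synced x || (x == xf N).
Proof.
elim=> [|y f r gy IHy lf rR].
  by apply/orP; left; apply/syncedP; exists (n0 N) => b; rewrite ffunE.
case/orP: IHy => [/syncedP [f' yf]|/eqP y_final]; last first.
  by move: lf.1; rewrite y_final (negbTE (xf_not_enabled f)).
have ff' := synced_enabled yf lf.1; subst f'.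
have full b : b \in P f by apply: reachable_party (greedy_reachable gy) (yf b).
have [nf_f|fnf] := eqVneq f (nf N).
  apply/orP; right; apply/eqP/ffunP => b; rewrite !ffunE full.
  have iT : inT f b r by rewrite /inT full rR.
  by apply/eqP; rewrite xnext_eq0 // nf_f.
apply/orP; left; apply: contraT => ns; exfalso.
have gz := greedyS gy lf rR.
have nfinal : stepm y f r <> xf N.
  have [[a _] _] := wf; move=> /ffunP/(_ a); rewrite !ffunE full => /eqP.
  by apply/negP; apply: xnext_neq0.
have [M lM] := greedy_least_enabled gz nfinal.
(* The step at [f] unconditionally enables [M], which is indifferent. *)
apply: (uncond_enables_indifferent rR _ _ (least_enabled_indifferent (ltnSn _) gz ns lM)).
  by apply: contraTneq (least_enabled_step lf rR lM.1) => ->; rewrite ltnn.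
split=> [|p pM]; first by apply/subsetP => b _; apply: full.
apply: xnext_set1 => //.
by case: lM => /forall_inP /(_ _ pM); rewrite ffunE full.
Qed.

Lemma greedy_occ s (x y : mk) : greedy x -> occ x s = Some y -> greedy y.
Proof.
elim: s x => [|[n r] s IH] x /=; first by move=> ? [<-].
case: ifP => // /andP [en rR] gx; apply: IH.
case/orP: (greedy_synced gx) => [/syncedP [f xt]|/eqP x_final]; last first.
  by move: en; rewrite x_final (negbTE (xf_not_enabled n)).
exact: greedyS gx (synced_least xt en) rR.
Qed.

Lemma reachable_greedy x : reachable x -> greedy x.
Proof. by case=> s; apply: greedy_occ greedy0. Qed.

Lemma enabled_synced n :
  exists x, [/\ reachable x, enabled x n & forall b, x b = [set n]].
Proof.
have [[s [x [occ_s en]]] _] := (snd.1 n, snd.2).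
have rx : reachable x by exists s.
case/orP: (greedy_synced (reachable_greedy rx)) => [/syncedP [f xt]|/eqP x_final].
  by exists x; split=> // b; rewrite xt (synced_enabled xt en).
by move: en; rewrite x_final (negbTE (xf_not_enabled n)).
Qed.

Lemma party_all n a : a \in P n.
Proof. by have [x [rx _ xn]] := enabled_synced n; apply: reachable_party rx (xn a). Qed.

Lemma xnext_uniform n r : n != nf N -> r \in R n ->
  exists n', forall a, X n a r = [set n'].
Proof.
move=> nnf rR; have [x [rx en xn]] := enabled_synced n.
have gy := greedyS (reachable_greedy rx) (synced_least xn en) rR.
case/orP: (greedy_synced gy) => [/syncedP [n' yn']|/eqP y_final].
  by exists n' => a; have := yn' a; rewrite ffunE party_all.
have [[a _] _] := wf; move/ffunP/(_ a): y_final; rewrite !ffunE party_all => /eqP X0.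
by case/negP: (xnext_neq0 (party_all n a) rR nnf).
Qed.

End Negotiation.

Theorem lemma2 (A : finType) (Q : A -> Type) (N : negotiation Q) :
  well_formed N -> SDAN N -> irreducible N ->
  (forall (n : atom N) (a : A), a \in parties N n) /\
  (forall (n : atom N), n != nf N ->
     forall r, r \in outcomes N n ->
       exists n' : atom N, forall a : A, xnext N n a r = [set n']).
Proof.
move=> wf [snd [det acy]] irr.
by split=> [n a|n nnf r rR]; [apply: party_all | apply: xnext_uniform].
Qed.
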